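(* Let $n,t\ge1$. For each $1\le k\le n$ let $\bm{X}^k=(X_1^k,\dots,X_t^k)$ be a random vector, fix an index $1\le i\le n$, and let $\widetilde{\bm{X}}^i=(\widetilde{X}_1^i,\dots,\widetilde{X}_t^i)$ be another random vector. Assume spatial independence: $\bm{X}^1,\dots,\bm{X}^n$ are mutually independent, and $\bm{X}^1,\dots,\bm{X}^{i-1},\widetilde{\bm{X}}^i,\bm{X}^{i+1},\dots,\bm{X}^n$ are mutually independent. Let $f_j\in\mathfrak{F}_{USIA}$ for $1\le j\le t$, and set $X_j=f_j(X_j^1,\dots,X_j^n)$ and $\widetilde{X}_j=f_j(X_j^1,\dots,X_j^{i-1},\widetilde{X}_j^i,X_j^{i+1},\dots,X_j^n)$. If $\bm{X}^i\le_{dcx}\widetilde{\bm{X}}^i$ and $\bm{X}^i$ and $\widetilde{\bm{X}}^i$ have a common conditionally increasing copula, then $$(X_1,\dots,X_t)\le_{dcx}(\widetilde{X}_1,\dots,\widetilde{X}_t)\quad\text{and}\quad \sum_{j=1}^t\alpha_jX_j\le_{cx}\sum_{j=1}^t\alpha_j\widetilde{X}_j$$ for all $\alpha_1,\dots,\alpha_t\ge0$.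
   Context: $\mathfrak{F}_{USIA}$ is the set of functions $f:\mathbb{R}^n\to\mathbb{R}$ such that for every $\bm{x}\in\mathbb{R}^n$ and every coordinate $i$, the map $x_i\mapsto f(\bm{x})$ (other coordinates fixed) is affine and strictly increasing. A function $\phi:\mathbb{R}^t\to\mathbb{R}$ is directionally convex if it is supermodular and convex in each coordinate. $\bm{X}\le_{dcx}\bm{Y}$ means $\mathbb{E}\phi(\bm{X})\le\mathbb{E}\phi(\bm{Y})$ for all directionally convex $\phi$ for which the expectations exist; $X\le_{cx}Y$ (real) means $\mathbb{E}\phi(X)\le\mathbb{E}\phi(Y)$ for all convex $\phi$. A copula $C$ is conditionally increasing if a random vector $\bm{U}$ with distribution $C$ satisfies: for every $i$ and every index set $J\not\ni i$, $\mathbb{E}[\psi(U_i)\mid U_j,j\in J]$ is increasing in $(U_j)_{j\in J}$ for every increasing $\psi$. *)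

From HB Require Import structures.
From mathcomp Require Import all_boot all_order all_algebra.
From mathcomp Require Import all_classical all_reals all_analysis.
Set Implicit Arguments. Unset Strict Implicit. Unset Printing Implicit Defensive.
Import Order.TTheory GRing.Theory Num.Theory.
Local Open Scope classical_set_scope.
Local Open Scope ring_scope.

Section defs.
Variable R : realType.

Definition upd {I : finType} (x : I -> R) (k : I) (y : R) : I -> R :=
  fun l => if l == k then y else x l.

Definition USIA {n : nat} (f : ('I_n -> R) -> R) : Prop :=
  forall (x : 'I_n -> R) (k : 'I_n), exists a b : R,
    0 < a /\ forall y : R, f (upd x k y) = a * y + b.

Definition convex_fun (g : R -> R) : Prop :=
  forall (a b l : R), 0 <= l <= 1 ->
    g (l * a + (1 - l) * b) <= l * g a + (1 - l) * g b.

Definition supermodular {t : nat} (phi : ('I_t -> R) -> R) : Prop :=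
  forall x y : 'I_t -> R,
    phi x + phi y <= phi (fun j => Num.max (x j) (y j))
                     + phi (fun j => Num.min (x j) (y j)).

Definition dir_convex {t : nat} (phi : ('I_t -> R) -> R) : Prop :=
  supermodular phi /\
  forall (x : 'I_t -> R) (j : 'I_t), convex_fun (fun y => phi (upd x j y)).

(* Borel sigma-algebra of R^t: product sigma-algebra generated by rectangles *)
Definition rect_sets (t : nat) : set (set ('I_t -> R)) :=
  [set A | exists B : 'I_t -> set R,
     (forall j, measurable (B j)) /\ A = [set x | forall j, B j (x j)]].

Definition Rt_measurable (t : nat) (A : set ('I_t -> R)) : Prop :=
  smallest (sigma_algebra setT) (@rect_sets t) A.

Definition Rt_measurable_fun (t : nat) (g : ('I_t -> R) -> R) : Prop :=
  forall B : set R, measurable B -> Rt_measurable (g @^-1` B).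

Section onspace.
Context {d : measure_display} {T : measurableType d} (P : probability T R).

Definition vec_at {t : nat} (Y : 'I_t -> T -> R) (w : T) : 'I_t -> R :=
  fun j => Y j w.

Definition mutually_independent {n t : nat} (Y : 'I_n -> 'I_t -> T -> R) : Prop :=
  forall A : 'I_n -> set ('I_t -> R), (forall k, Rt_measurable (A k)) ->
    P (\bigcap_(k in [set: 'I_n]) [set w | A k (vec_at (Y k) w)])
    = (\prod_(k < n) P [set w | A k (vec_at (Y k) w)])%E.

(* directionally convex order (expectations assumed to exist, i.e. finite) *)
Definition dcx_le {t : nat} (Y Z : 'I_t -> T -> R) : Prop :=
  forall phi : ('I_t -> R) -> R, dir_convex phi ->
    P.-integrable setT (fun w => (phi (vec_at Y w))%:E) ->
    P.-integrable setT (fun w => (phi (vec_at Z w))%:E) ->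
    (\int[P]_w (phi (vec_at Y w))%:E <= \int[P]_w (phi (vec_at Z w))%:E)%E.

Definition cx_le (Y Z : T -> R) : Prop :=
  forall phi : R -> R, convex_fun phi ->
    P.-integrable setT (fun w => (phi (Y w))%:E) ->
    P.-integrable setT (fun w => (phi (Z w))%:E) ->
    (\int[P]_w (phi (Y w))%:E <= \int[P]_w (phi (Z w))%:E)%E.

Definition has_copula {t : nat} (Y : 'I_t -> T -> R) (C : ('I_t -> R) -> R) : Prop :=
  forall x : 'I_t -> R,
    P [set w | forall j, Y j w <= x j]
    = (C (fun j => fine (P [set w | Y j w <= x j])))%:E.

Definition cdf_on_unit_cube {t : nat} (U : 'I_t -> T -> R) (C : ('I_t -> R) -> R) : Prop :=
  forall u : 'I_t -> R, (forall j, 0 <= u j <= 1) ->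
    P [set w | forall j, U j w <= u j] = (C u)%:E.

(* U is conditionally increasing: for all i, J not containing i, and increasing
   psi, E[psi(U_i) | U_j, j in J] has a version g(U) that is increasing in
   (U_j)_{j in J}. *)
Definition cond_increasing_rv {t : nat} (U : 'I_t -> T -> R) : Prop :=
  forall (i : 'I_t) (J : {set 'I_t}), i \notin J ->
  forall psi : R -> R, {homo psi : x y / x <= y} ->
  exists g : ('I_t -> R) -> R,
    [/\ Rt_measurable_fun g,
        (forall u v : 'I_t -> R, (forall j, j \in J -> u j = v j) -> g u = g v),
        (forall u v : 'I_t -> R, (forall j, u j <= v j) -> g u <= g v) &
        forall B : 'I_t -> set R, (forall j, measurable (B j)) ->
          (\int[P]_(w in [set w | forall j, j \in J -> B j (U j w)])
              (psi (U i w))%:E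
           = \int[P]_(w in [set w | forall j, j \in J -> B j (U j w)])
              (g (vec_at U w))%:E)%E].
End onspace.

Definition is_copula {t : nat} (C : ('I_t -> R) -> R) : Prop :=
  exists (d' : measure_display) (O : measurableType d') (Q : probability O R)
         (U : 'I_t -> O -> R),
    (forall j, measurable_fun setT (U j)) /\
    (forall j (u : R), 0 <= u <= 1 -> Q [set w | U j w <= u] = u%:E) /\
    cdf_on_unit_cube Q U C.

Definition cond_increasing_copula {t : nat} (C : ('I_t -> R) -> R) : Prop :=
  forall (d' : measure_display) (O : measurableType d') (Q : probability O R)
         (U : 'I_t -> O -> R),
    (forall j, measurable_fun setT (U j)) ->
    cdf_on_unit_cube Q U C -> cond_increasing_rv Q U.

Definition replace {T : Type} {n t : nat} (X : 'I_n -> 'I_t -> T -> R) (i : 'I_n)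
  (Xt : 'I_t -> T -> R) : 'I_n -> 'I_t -> T -> R :=
  fun k => if k == i then Xt else X k.

End defs.

(** Write [z] for the family of vectors [X^k], [k <> i]. Because every [f_j] is
    affine and strictly increasing in its [i]-th argument, for fixed [z] the
    output vector is [x |-> (a_j x_j + b_j)_j] applied to [X^i] (resp. to the
    replacement vector), with slopes [a_j > 0] depending on [z]; composing a
    directionally convex function with such a map keeps it directionally
    convex. By independence the joint law of the replaced vector and [z] is a
    product, so Fubini turns [E phi(Y)] into an integral over [z] of
    expectations to which the hypothesis [X^i <=dcx X~^i] applies pointwise.
    The convex order follows because [x |-> psi (sum_j alpha_j x_j)] is
    directionally convex for convex [psi] and [alpha >= 0].
    The dcx order does not assume [phi] measurable; measurability follows
    because convexity in each coordinate makes [phi] Lipschitz from the left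
    in that coordinate, so rounding the coordinates down to finer and finer
    grids, one at a time, exhibits [phi] as an iterated pointwise limit of
    measurable functions. *)

From HB Require Import structures.
From mathcomp Require Import all_boot all_order all_algebra.
From mathcomp Require Import all_classical all_reals all_analysis.
From mathcomp Require Import measurable_realfun ring lra.
Import numFieldNormedType.Exports.
Import Order.TTheory GRing.Theory Num.Theory.
Set Implicit Arguments. Unset Strict Implicit. Unset Printing Implicit Defensive.
Local Open Scope classical_set_scope.
Local Open Scope ring_scope.

Section dcx_replacement.
Variable R : realType.
Local Notation Rvec m := (g_sigma_algebraType (@rect_sets R m)).

(** * Measurability on [R^m] *)

Lemma measurable_rect m (B : 'I_m -> set R) : (forall j, measurable (B j)) ->
  measurable ([set x | forall j, B j (x j)] : set (Rvec m)).
Proof. by move=> mB; apply: sub_sigma_algebra; exists B. Qed.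

Lemma measurable_coord m (j : 'I_m) : measurable_fun setT (fun x : Rvec m => x j).
Proof.
move=> _ B mB; rewrite setTI.
have -> : (fun x : Rvec m => x j) @^-1` B =
    [set x | forall l, (if l == j then B else setT) (x l)].
  apply/seteqP; split => x /=; last by move/(_ j); rewrite eqxx.
  by move=> Bx l; case: eqP => // ->.
by apply: (@measurable_rect m (fun l => if l == j then B else setT)) => l; case: eqP.
Qed.

Lemma measurable_fun_Rvec d (D : measurableType d) m (g : D -> Rvec m) :
  (forall j, measurable_fun setT (fun w => g w j)) -> measurable_fun setT g.
Proof.
move=> mg; apply: (@measurability _ _ D (Rvec m) setT g _ erefl).
move=> _ [_ [B [mB ->]] <-].
have -> : setT `&` g @^-1` [set x | forall j, B j (x j)] =
    \bigcap_(j in [set: 'I_m]) (setT `&` (fun w => g w j) @^-1` B j).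
  apply/seteqP; split => w /=; first by move=> [_ gB] j _; split => //; apply: gB.
  by move=> gB; split => // j; have [] := gB j I.
apply: fin_bigcap_measurable; first exact: finite_finset.
by move=> j _; apply: mg.
Qed.

Lemma measurable_vec_at d (D : measurableType d) m (V : 'I_m -> D -> R) :
  (forall j, measurable_fun setT (V j)) ->
  measurable_fun setT (fun w => vec_at V w : Rvec m).
Proof. exact: measurable_fun_Rvec. Qed.

Definition left_lipschitz_at (h : R -> R) (y : R) : Prop :=
  exists M : R, forall e, 0 <= e <= 1 -> `|h (y - e) - h y| <= M * e.

Definition coord_left_lipschitz m (g : ('I_m -> R) -> R) : Prop :=
  forall x k y, left_lipschitz_at (fun v => g (upd x k v)) y.

Lemma floor_div_approx (c y : R) : 0 < c ->
  0 <= y - (Num.floor (c * y))%:~R / c <= c^-1.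
Proof.
move=> c0; have /andP[fl flt] := floor_itv (c * y).
have -> : y - (Num.floor (c * y))%:~R / c = (c * y - (Num.floor (c * y))%:~R) / c.
  by field; rewrite gt_eqF.
rewrite divr_ge0 ?subr_ge0 ?(ltW c0) //= ler_pdivrMr // mulVf ?gt_eqF //.
by move: flt; rewrite intrD; lra.
Qed.

Lemma measurable_floor_level (c : R) (q : int) :
  measurable [set y : R | Num.floor (c * y) = q].
Proof.
have -> : [set y : R | Num.floor (c * y) = q] =
    setT `&` ( *%R c) @^-1` `[q%:~R, (q + 1)%:~R[.
  apply/seteqP; split => y /=; first by move=> <-; rewrite in_itv /= floor_itv.
  by move=> [_]; rewrite in_itv /= => /floor_def.
exact: mulrl_measurable.
Qed.

Lemma measurable_fun_floor_select m (k : 'I_m) (c : R) (G : int -> Rvec m -> R) :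
  (forall q, measurable_fun setT (G q)) ->
  measurable_fun setT (fun x : Rvec m => G (Num.floor (c * x k)) x).
Proof.
move=> mG _ B mB; rewrite setTI.
have -> : (fun x : Rvec m => G (Num.floor (c * x k)) x) @^-1` B =
    \bigcup_q ((fun x : Rvec m => x k) @^-1` [set y | Num.floor (c * y) = q]
               `&` G q @^-1` B).
  apply/seteqP; split => x /=; first by move=> Bx; exists (Num.floor (c * x k)).
  by move=> [q _ [/= <-]].
apply: countable_bigcupT_measurable; first exact: countableP.
move=> q; apply: measurableI; rewrite -[X in measurable X]setTI.
  by apply: measurable_coord => //; exact: measurable_floor_level.
exact: mG.
Qed.

Lemma measurable_fun_diag m (k : 'I_m) (F : R -> Rvec m -> R) :
  (forall y, measurable_fun setT (F y)) ->
  (forall x : Rvec m, left_lipschitz_at (F ^~ x) (x k)) ->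
  measurable_fun setT (fun x : Rvec m => F (x k) x).
Proof.
move=> mF FL.
pose h N (x : Rvec m) := F ((Num.floor (N.+1%:R * x k))%:~R / N.+1%:R) x.
apply: (measurable_fun_cvg (h := h)).
  move=> N; exact: (@measurable_fun_floor_select m k N.+1%:R
    (fun q => F (q%:~R / N.+1%:R)) (fun q => mF _)).
move=> x _; have [M FM] := FL x.
apply/cvgrPdist_le => eps eps0.
have a0 : 0 < eps / (`|M| + 1) by rewrite divr_gt0 // ltr_pwDr.
have /cvgrPdist_le /(_ _ a0) := @cvg_harmonic R.
apply: filterS => N; rewrite sub0r normrN ger0_norm ?harmonic_ge0 // /h => hN.
have /andP[e0 eh] := floor_div_approx (x k) (ltr0Sn R N).
set e := x k - _ in e0 eh.
have -> : (Num.floor (N.+1%:R * x k))%:~R / N.+1%:R = x k - e by rewrite subKr.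
have e1 : 0 <= e <= 1 by rewrite e0 (le_trans eh) // invf_le1 // ler1n.
rewrite distrC (le_trans (FM e e1)) //.
have ea : e <= eps / (`|M| + 1) by rewrite (le_trans eh).
apply: (le_trans (ler_wpM2r e0 (ler_wpDr ler01 (ler_norm M)))).
by rewrite mulrC -ler_pdivlMr ?ltr_pwDr.
Qed.

Definition splice m (s : seq 'I_m) (x x0 : 'I_m -> R) : 'I_m -> R :=
  fun l => if l \in s then x l else x0 l.

Lemma splice_cons m k s (x x0 : 'I_m -> R) :
  splice (k :: s) x x0 = splice s x (upd x0 k (x k)).
Proof.
apply/funext => l; rewrite /splice /upd inE.
by have [->|_] := eqP; case: ifP.
Qed.

Lemma coord_left_lipschitz_measurable m (g : ('I_m -> R) -> R) :
  coord_left_lipschitz g -> measurable_fun setT (g : Rvec m -> R).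
Proof.
move=> gL.
suff msplice s x0 : measurable_fun setT (fun x : Rvec m => g (splice s x x0)).
  apply: eq_measurable_fun (msplice (enum 'I_m) (fun=> 0)) => x _.
  by congr g; apply/funext => l; rewrite /splice mem_enum.
elim: s x0 => [|k s IHs] x0.
  apply: eq_measurable_fun (measurable_cst (g x0)) => x _.
  by congr g; apply/funext => l.
apply: eq_measurable_fun
  (measurable_fun_diag (F := fun y x => g (splice s x (upd x0 k y))) (fun=> IHs _) _).
  by move=> x _; rewrite splice_cons.
move=> x /=; have [ks|ks] := boolP (k \in s).
  have spliceE v : splice s x (upd x0 k v) = splice s x x0.
    apply/funext => l; rewrite /splice /upd; case: ifP => // ls.
    by case: eqP => // lk; rewrite lk ks in ls.
  by exists 0 => e _; rewrite !spliceE subrr normr0 mul0r.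
have spliceE v : splice s x (upd x0 k v) = upd (splice s x x0) k v.
  apply/funext => l; rewrite /splice /upd; case: ifP => // ls.
  by case: eqP => // lk; rewrite -lk ls in ks.
under eq_fun do rewrite spliceE.
exact: gL.
Qed.

(** * Directional convexity *)

Lemma convex_fun_left_lipschitz (h : R -> R) (y : R) :
  convex_fun h -> left_lipschitz_at h y.
Proof.
(* The chord over [y - 1, y] bounds [h (y - e) - h y] from above; midpoint
   convexity on [y - e, y + e] and the chord over [y, y + 1] bound it below. *)
move=> hc; exists (`|h (y - 1) - h y| + `|h (y + 1) - h y|) => e /andP[e0 e1].
have e01 : 0 <= e <= 1 by rewrite e0 e1.
have half01 : 0 <= (2^-1 : R) <= 1 by rewrite invr_ge0 ler0n invf_le1 ?ler1n ?ltr0n.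
have hl : h (y - e) <= e * h (y - 1) + (1 - e) * h y.
  by have := hc (y - 1) y e e01; congr (h _ <= _); ring.
have hr : h (y + e) <= e * h (y + 1) + (1 - e) * h y.
  by have := hc (y + 1) y e e01; congr (h _ <= _); ring.
have hm : h y <= 2^-1 * h (y - e) + (1 - 2^-1) * h (y + e).
  by have := hc (y - e) (y + e) 2^-1 half01; congr (h _ <= _); field.
have norm_bounds x : - (e * `|x|) <= e * x <= e * `|x|.
  by rewrite -mulrN !ler_wpM2l // ?ler_norm // lerNnormlW.
have /andP[dl1 dl2] := norm_bounds (h (y - 1) - h y).
have /andP[dr1 dr2] := norm_bounds (h (y + 1) - h y).
rewrite mulrDl ![_ * e]mulrC; apply/ler_normlP; split; lra.
Qed.

Lemma dir_convex_coord_left_lipschitz m (phi : ('I_m -> R) -> R) :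
  dir_convex phi -> coord_left_lipschitz phi.
Proof. by move=> [_ phi_cx] x k y; exact: convex_fun_left_lipschitz. Qed.

Lemma USIA_coord_left_lipschitz m (g : ('I_m -> R) -> R) :
  USIA g -> coord_left_lipschitz g.
Proof.
move=> g_usia x k y; have [a [b [a0 gE]]] := g_usia x k.
exists a => e /andP[e0 _]; rewrite !gE.
have -> : a * (y - e) + b - (a * y + b) = - (a * e) by ring.
by rewrite normrN normrM !ger0_norm // ltW.
Qed.

Lemma convex_fun_comp_affine (h : R -> R) (a b : R) : convex_fun h ->
  convex_fun (fun y => h (a * y + b)).
Proof.
move=> hc u v l l01; have := hc (a * u + b) (a * v + b) l l01.
by congr (h _ <= _); ring.
Qed.

Lemma dir_convex_comp_affine t (phi : ('I_t -> R) -> R) (a b : 'I_t -> R) :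
  dir_convex phi -> (forall j, 0 <= a j) ->
  dir_convex (fun x => phi (fun j => a j * x j + b j)).
Proof.
move=> [phi_sm phi_cx] a0; split.
  move=> x y /=; under [fun j => _ * Num.max _ _ + _]funext do
    rewrite maxr_pMr // addr_maxl.
  by under [fun j => _ * Num.min _ _ + _]funext do rewrite minr_pMr // addr_minl.
move=> x j.
have -> : (fun y => phi (fun l => a l * upd x j y l + b l)) =
    (fun y => phi (upd (fun l => a l * x l + b l) j (a j * y + b j))).
  by apply/funext => y; congr phi; apply/funext => l; rewrite /upd; case: eqP => // ->.
exact: (convex_fun_comp_affine (a j) (b j) (phi_cx _ j)).
Qed.

Lemma convex_fun_pair_le (h : R -> R) (s s' lo hi : R) : convex_fun h ->
  lo <= s <= hi -> s + s' = hi + lo -> h s + h s' <= h hi + h lo.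
Proof.
move=> hc /andP[los shi] ss'.
have [hi_lo|lo_hi] := eqVneq hi lo.
  have es : s = hi by apply/le_anti; rewrite shi hi_lo los.
  have es' : s' = lo by move: ss'; rewrite es => /addrI.
  by rewrite es es'.
have d0 : 0 < hi - lo by rewrite subr_gt0 lt_neqAle eq_sym lo_hi (le_trans los).
(* [s] and [s'] are convex combinations of [hi] and [lo] with swapped weights. *)
pose l := (s - lo) / (hi - lo).
have l01 : 0 <= l <= 1.
  rewrite /l; apply/andP; split; first by rewrite divr_ge0 ?(ltW d0) ?subr_ge0.
  by rewrite (ler_pdivrMr _ _ d0) mul1r lerD2r.
have sE : s = l * hi + (1 - l) * lo by rewrite /l; field; rewrite subr_eq0.
have s'E : s' = l * lo + (1 - l) * hi.
  have -> : s' = hi + lo - s by rewrite -ss'; ring.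
  by rewrite sE; ring.
have := hc hi lo l l01; have := hc lo hi l l01.
rewrite -sE -s'E; lra.
Qed.

Lemma dir_convex_comp_wsum t (h : R -> R) (alpha : 'I_t -> R) : convex_fun h ->
  (forall j, 0 <= alpha j) ->
  dir_convex (fun y : 'I_t -> R => h (\sum_(j < t) alpha j * y j)).
Proof.
move=> hc a0; split.
  move=> x y /=; apply: convex_fun_pair_le => //.
    by rewrite !ler_sum // => j _; rewrite ler_wpM2l // ?ge_min ?le_max lexx.
  rewrite -!big_split /=; apply: eq_bigr => j _.
  by rewrite -!mulrDr addr_max_min.
move=> x j.
have -> : (fun y => h (\sum_(l < t) alpha l * upd x j y l)) =
    (fun y => h (alpha j * y + \sum_(l < t | l != j) alpha l * x l)).
  apply/funext => y; congr h; rewrite (bigD1 j) //= /upd eqxx; congr (_ + _).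
  by apply: eq_bigr => l lj; rewrite (negbTE lj).
exact: convex_fun_comp_affine.
Qed.

(** * Laws of independent pairs *)

Definition mfun_of d1 d2 (T1 : measurableType d1) (T2 : measurableType d2)
  (g : T1 -> T2) (mg : measurable_fun setT g) : {mfun T1 >-> T2} :=
  HB.pack g (isMeasurableFun.Build _ _ _ _ _ mg).

Section integration.
Local Open Scope ereal_scope.
Context d (T : measurableType d).

Lemma ae_le_integral (mu : {measure set T -> \bar R}) (g1 g2 : T -> \bar R) :
  measurable_fun setT g1 -> measurable_fun setT g2 ->
  {ae mu, forall x, g1 x <= g2 x} -> \int[mu]_x g1 x <= \int[mu]_x g2 x.
Proof.
move=> mg1 mg2 g12; rewrite integralE [leRHS]integralE; apply: leeB.
- apply: ae_ge0_le_integral => //; [exact: measurable_funepos|exact: measurable_funepos|].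
  apply: filterS g12 => x g12x _.
  by apply: (@funepos_le _ _ [set x]); rewrite ?inE // => y; rewrite inE => ->.
- apply: ae_ge0_le_integral => //; [exact: measurable_funeneg|exact: measurable_funeneg|].
  apply: filterS g12 => x g12x _.
  by apply: (@funeneg_le _ _ [set x]); rewrite ?inE // => y; rewrite inE => ->.
Qed.

Lemma eq_measure_integrable (mu1 mu2 : {measure set T -> \bar R}) (g : T -> \bar R) :
  (forall A, measurable A -> mu1 A = mu2 A) ->
  mu1.-integrable setT g -> mu2.-integrable setT g.
Proof.
move=> mu12 /integrableP[mg gfin]; apply/integrableP; split => //.
by rewrite (eq_measure_integral mu1) // => A mA _; rewrite mu12.
Qed.

Context d' (T' : measurableType d') (P : probability T R) (U : {RV P >-> T'}).

Lemma integral_distribution_measurable (g : T' -> \bar R) :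
  measurable_fun setT g -> \int[distribution P U]_y g y = \int[P]_x (g \o U) x.
Proof.
move=> mg; rewrite integralE [RHS]integralE.
rewrite !ge0_integral_distribution // -?funepos_comp -?funeneg_comp //.
- exact: measurable_funeneg.
- exact: measurable_funepos.
Qed.

Lemma integrable_distribution (g : T' -> \bar R) : measurable_fun setT g ->
  (distribution P U).-integrable setT g <-> P.-integrable setT (g \o U).
Proof.
move=> mg; have mgU : measurable_fun setT (g \o U).
  by apply: measurableT_comp => //; exact: measurable_funPT.
have normE : \int[distribution P U]_y `|g y| = \int[P]_x `|(g \o U) x|.
  by rewrite ge0_integral_distribution //; exact: measurableT_comp.
split => /integrableP[_ gfin]; apply/integrableP; split => //.
  by rewrite -normE.
by rewrite normE.
Qed.

End integration.

Section product_law.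
Context (T1 T2 : pointedType) (G1 : set (set T1)) (G2 : set (set T2)).
Hypotheses (G1T : G1 setT) (G2T : G2 setT).
Hypotheses (G1I : setI_closed G1) (G2I : setI_closed G2).
Local Notation M1 := (g_sigma_algebraType G1).
Local Notation M2 := (g_sigma_algebraType G2).
Let G12 : set (set (M1 * M2)%type) := [set A `*` B | A in G1 & B in G2].

Lemma measurable_prod_generated : @measurable _ (M1 * M2)%type = <<s G12 >>.
Proof.
apply/seteqP; split; last first.
  apply: smallest_sub; first exact: sigma_algebra_measurable.
  by move=> _ [A G1A [B G2B <-]]; apply: measurableX; exact: sub_sigma_algebra.
rewrite measurable_prod_measurableType.
apply: smallest_sub; first exact: smallest_sigma_algebra.
move=> _ [A mA [B mB <-]].
have mfst : measurable_fun setT (fst : g_sigma_algebraType G12 -> M1).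
  apply: (@measurability _ _ (g_sigma_algebraType G12) M1 setT fst G1 erefl).
  move=> _ [A' G1A' <-].
  by apply: sub_sigma_algebra; exists A' => //; exists setT; rewrite // setTI setXT.
have msnd : measurable_fun setT (snd : g_sigma_algebraType G12 -> M2).
  apply: (@measurability _ _ (g_sigma_algebraType G12) M2 setT snd G2 erefl).
  move=> _ [B' G2B' <-].
  by apply: sub_sigma_algebra; exists setT => //; exists B'; rewrite // setTI setTX.
have -> : A `*` B = fst @^-1` A `&` snd @^-1` B.
  by rewrite -setXT -setTX -setXI setIT setTI.
apply: (@measurableI _ (g_sigma_algebraType G12)).
  by have := mfst measurableT A mA; rewrite setTI.
by have := msnd measurableT B mB; rewrite setTI.
Qed.

Lemma setI_closed_prod : setI_closed G12.
Proof.
move=> _ _ [A1 G1A1 [B1 G2B1 <-]] [A2 G1A2 [B2 G2B2 <-]].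
rewrite -setXI; exists (A1 `&` A2); first exact: G1I.
by exists (B1 `&` B2) => //; exact: G2I.
Qed.

Context d (T : measurableType d) (P : probability T R).
Variables (U : {RV P >-> M1}) (Z : {RV P >-> M2}) (UZ : {RV P >-> (M1 * M2)%type}).
Hypothesis UZE : forall w, UZ w = (U w, Z w).
Hypothesis UZ_indep : forall A B, G1 A -> G2 B ->
  P (U @^-1` A `&` Z @^-1` B) = (P (U @^-1` A) * P (Z @^-1` B))%E.

Lemma distribution_pair_indep (S : set (M1 * M2)%type) : measurable S ->
  distribution P UZ S = (distribution P U \x distribution P Z)%E S.
Proof.
move=> mS; apply: (measure_unique G12 (fun=> setT)) => //.
- exact: measurable_prod_generated.
- exact: setI_closed_prod.
- by move=> _; exists setT => //; exists setT; rewrite ?setXTT.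
- by apply/seteqP; split => // x _; exists 0%N.
- move=> _ [A G1A [B G2B <-]].
  have mA : measurable (A : set M1) by exact: sub_sigma_algebra.
  have mB : measurable (B : set M2) by exact: sub_sigma_algebra.
  transitivity (distribution P U A * distribution P Z B)%E; last first.
    exact: (esym (product_measure1E _ _ mA mB)).
  rewrite /distribution /pushforward /= -UZ_indep //.
  by congr (P _); apply/seteqP; split => w /=; rewrite UZE.
- by move=> _; rewrite /= /distribution /pushforward preimage_setT probability_setT ltry.
Qed.

End product_law.

Lemma rect_setsT m : @rect_sets R m setT.
Proof. by exists (fun=> setT); split => //; apply/seteqP. Qed.

Lemma setI_closed_rect_sets m : setI_closed (@rect_sets R m).
Proof.
move=> _ _ [B1 [mB1 ->]] [B2 [mB2 ->]].
exists (fun j => B1 j `&` B2 j); split; first by move=> j; exact: measurableI.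
apply/seteqP; split => x /=; first by move=> [B1x B2x] j.
by move=> Bx; split => j; have [] := Bx j.
Qed.

Definition cyl_except n t (i : 'I_n) : set (set ('I_n -> 'I_t -> R)) :=
  [set A | exists B : 'I_n -> set ('I_t -> R), (forall k, Rt_measurable (B k)) /\
     A = [set z | forall k, k != i -> B k (z k)]].

Lemma cyl_exceptT n t (i : 'I_n) : cyl_except (t := t) i setT.
Proof.
exists (fun=> setT); split; last by apply/seteqP.
by move=> k; exact: (@measurableT _ (Rvec t)).
Qed.

Lemma setI_closed_cyl_except n t (i : 'I_n) : setI_closed (cyl_except (t := t) i).
Proof.
move=> _ _ [B1 [mB1 ->]] [B2 [mB2 ->]].
exists (fun k => B1 k `&` B2 k); split.
  by move=> k; exact: (@measurableI _ (Rvec t) _ _ (mB1 k) (mB2 k)).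
apply/seteqP; split => z /=.
  by move=> [B1z B2z] k ki; split; [exact: B1z|exact: B2z].
by move=> Bz; split => k ki; have [] := Bz k ki.
Qed.

Section independence.
Context d (T : measurableType d) (P : probability T R) (n t : nat).

Lemma mutually_independent_split (Y : 'I_n -> 'I_t -> T -> R) (i : 'I_n)
    (A : set ('I_t -> R)) (B : 'I_n -> set ('I_t -> R)) :
  mutually_independent P Y -> Rt_measurable A -> (forall k, Rt_measurable (B k)) ->
  P [set w | A (vec_at (Y i) w) /\ forall k, k != i -> B k (vec_at (Y k) w)] =
  (P [set w | A (vec_at (Y i) w)] *
   P [set w | forall k, k != i -> B k (vec_at (Y k) w)])%E.
Proof.
move=> Y_indep mA mB.
have splitE A' : Rt_measurable A' ->
    P [set w | A' (vec_at (Y i) w) /\ forall k, k != i -> B k (vec_at (Y k) w)] =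
    (P [set w | A' (vec_at (Y i) w)] *
     \prod_(k < n | k != i) P [set w | B k (vec_at (Y k) w)])%E.
  move=> mA'; pose C k := if k == i then A' else B k.
  have -> : [set w | A' (vec_at (Y i) w) /\ forall k, k != i -> B k (vec_at (Y k) w)] =
      \bigcap_(k in [set: 'I_n]) [set w | C k (vec_at (Y k) w)].
    apply/seteqP; split => w /=.
      by move=> [A'w Bw] k _; rewrite /C; case: eqP => [->|/eqP ki] //; exact: Bw.
    move=> Cw; split; first by have := Cw i I; rewrite /C eqxx.
    by move=> k ki; have := Cw k I; rewrite /C (negbTE ki).
  rewrite Y_indep; last by move=> k; rewrite /C; case: eqP.
  rewrite (bigD1 i) //= /C eqxx; congr (_ * _)%E.
  by apply: eq_bigr => k ki; rewrite (negbTE ki).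
have -> : [set w | forall k, k != i -> B k (vec_at (Y k) w)] =
    [set w | setT (vec_at (Y i) w) /\ forall k, k != i -> B k (vec_at (Y k) w)].
  by apply/seteqP; split => w /=; [|case].
rewrite !splitE //; last exact: (@measurableT _ (Rvec t)).
have -> : [set w | @setT ('I_t -> R) (vec_at (Y i) w)] = setT by apply/seteqP.
by rewrite probability_setT mul1e.
Qed.

End independence.

(** * Replacing one input vector *)

Lemma replace_id (T : Type) n t (X : 'I_n -> 'I_t -> T -> R) (i : 'I_n) :
  replace X i (X i) = X.
Proof. by apply/funext => k; rewrite /replace; case: eqP => // ->. Qed.

Section single_replacement.
Context d (T : measurableType d) (P : probability T R) (n t : nat).
Variables (X : 'I_n -> 'I_t -> T -> R) (i : 'I_n) (f : 'I_t -> ('I_n -> R) -> R).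
Hypotheses (mX : forall k j, measurable_fun setT (X k j)) (f_usia : forall j, USIA (f j)).
Local Notation Others := (g_sigma_algebraType (cyl_except (t := t) i)).

Lemma measurable_coord_others k j : k != i ->
  measurable_fun setT (fun z : Others => z k j).
Proof.
move=> ki _ B mB; rewrite setTI; apply: sub_sigma_algebra.
exists (fun l => if l == k then [set v : 'I_t -> R | B (v j)] else setT); split.
  move=> l; case: eqP => _; last exact: (@measurableT _ (Rvec t)).
  by have := measurable_coord j measurableT mB; rewrite setTI.
apply/seteqP; split => z /=; first by move=> Bz l li; case: eqP => // ->.
by move/(_ k ki); rewrite eqxx.
Qed.

(* Coordinate [i] of [others w] is [X^i], but [cyl_except i] ignores it. *)
Definition others (w : T) : Others := fun k => vec_at (X k) w.

Lemma measurable_others : measurable_fun setT others.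
Proof.
apply: (@measurability _ _ T Others setT others _ erefl) => _ [_ [B [mB ->]] <-].
have -> : setT `&` others @^-1` [set z | forall k, k != i -> B k (z k)] =
    \bigcap_(k in [set k | k != i])
      (setT `&` (fun w => vec_at (X k) w : Rvec t) @^-1` B k).
  apply/seteqP; split => w /=; first by move=> [_ Bw] k ki; split => //; exact: Bw.
  by move=> Bw; split => // k ki; have [] := Bw k ki.
apply: fin_bigcap_measurable; first exact: finite_finset.
by move=> k _; apply: (measurable_vec_at (mX k)) => //; exact: mB.
Qed.

Definition combine (p : Rvec t * Others) : 'I_t -> R :=
  fun j => f j (upd (fun k => p.2 k j) i (p.1 j)).

Lemma measurable_combine : measurable_fun setT (combine : _ -> Rvec t).
Proof.
apply: measurable_fun_Rvec => j.
apply: (@measurableT_comp _ _ _ _ _ _ (f j : Rvec n -> R) setT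
  (fun p : Rvec t * Others => upd (fun k => p.2 k j) i (p.1 j) : Rvec n)).
  exact: coord_left_lipschitz_measurable (USIA_coord_left_lipschitz (f_usia j)).
apply: measurable_fun_Rvec => k; rewrite /upd.
have [ki|ki] := eqVneq k i.
  exact: (measurableT_comp (measurable_coord j) measurable_fst).
exact: (measurableT_comp (measurable_coord_others j ki) measurable_snd).
Qed.

Lemma dir_convex_comp_combine (phi : ('I_t -> R) -> R) (z : Others) :
  dir_convex phi -> dir_convex (fun x => phi (combine (x, z))).
Proof.
move=> phi_dcx.
have /choice[ab abE] : forall j, exists ab : R * R, 0 < ab.1 /\
    forall y, f j (upd (fun k => z k j) i y) = ab.1 * y + ab.2.
  by move=> j; have [a [b [a0 fE]]] := f_usia j (fun k => z k j) i; exists (a, b).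
have -> : (fun x => phi (combine (x, z))) =
    (fun x => phi (fun j => (ab j).1 * x j + (ab j).2)).
  by apply/funext => x; congr phi; apply/funext => j; exact: (abE j).2.
by apply: dir_convex_comp_affine => // j; exact/ltW/(abE j).1.
Qed.

Definition replaced_outputs (V : 'I_t -> T -> R) : 'I_t -> T -> R :=
  fun j w => f j (fun k => replace X i V k j w).

Lemma replaced_outputsE V w :
  vec_at (replaced_outputs V) w = combine (vec_at V w, others w).
Proof.
apply/funext => j; congr (f j); apply/funext => k.
by rewrite /replace /upd; case: (k == i).
Qed.

Local Notation law mV := (distribution P (mfun_of (measurable_vec_at mV))).
Local Notation law_others := (distribution P (mfun_of measurable_others)).

Section replacement.
Variable V : 'I_t -> T -> R.
Hypotheses (mV : forall j, measurable_fun setT (V j))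
  (V_indep : mutually_independent P (replace X i V)).

Lemma indep_replaced_others (A : set (Rvec t)) (B : set Others) :
  rect_sets A -> cyl_except i B ->
  P ((fun w => vec_at V w) @^-1` A `&` others @^-1` B) =
  (P ((fun w => vec_at V w) @^-1` A) * P (others @^-1` B))%E.
Proof.
move=> rA [C [mC ->]]; have mA : Rt_measurable A by exact: sub_sigma_algebra.
have rV : replace X i V i = V by rewrite /replace eqxx.
have rX k : k != i -> replace X i V k = X k by move=> ki; rewrite /replace (negbTE ki).
have := mutually_independent_split i V_indep mA mC; rewrite rV.
have -> : [set w | forall k, k != i -> C k (vec_at (replace X i V k) w)] =
    others @^-1` [set z | forall k, k != i -> C k (z k)].
  by apply/seteqP; split => w /= Cw k ki; have := Cw k ki; rewrite rX.
move=> <-; congr (P _); apply/seteqP; split => w /= [Aw Cw]; split => // k ki;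
  by have := Cw k ki; rewrite rX.
Qed.

Let pairV := mfun_of (measurable_fun_pair (measurable_vec_at mV) measurable_others).

Lemma distribution_replaced_pair (S : set (Rvec t * Others)%type) : measurable S ->
  distribution P pairV S = (law mV \x law_others)%E S.
Proof.
apply: (distribution_pair_indep (rect_setsT t) (cyl_exceptT t i)).
- exact: setI_closed_rect_sets.
- exact: setI_closed_cyl_except.
- by [].
- exact: indep_replaced_others.
Qed.

Lemma integral_replaced_prod (H : Rvec t * Others -> \bar R) : measurable_fun setT H ->
  (\int[P]_w H (vec_at V w, others w) = \int[law mV \x law_others]_p H p)%E.
Proof.
move=> mH; rewrite -[LHS](integral_distribution_measurable pairV mH).
by apply: eq_measure_integral => S mS _; exact: distribution_replaced_pair.
Qed.

Lemma integrable_replaced_prod (H : Rvec t * Others -> \bar R) : measurable_fun setT H ->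
  P.-integrable setT (fun w => H (vec_at V w, others w)) ->
  (law mV \x law_others)%E.-integrable setT H.
Proof.
move=> mH /(integrable_distribution pairV mH).
by apply: eq_measure_integrable => S mS; exact: distribution_replaced_pair.
Qed.

End replacement.

Lemma dcx_le_replace (V1 V2 : 'I_t -> T -> R) :
  (forall j, measurable_fun setT (V1 j)) -> (forall j, measurable_fun setT (V2 j)) ->
  mutually_independent P (replace X i V1) -> mutually_independent P (replace X i V2) ->
  dcx_le P V1 V2 -> dcx_le P (replaced_outputs V1) (replaced_outputs V2).
Proof.
move=> mV1 mV2 V1_indep V2_indep V12 phi phi_dcx.
pose H p := (phi (combine p))%:E.
have mH : measurable_fun setT H.
  apply/measurable_EFinP; apply: measurableT_comp measurable_combine.
  exact: coord_left_lipschitz_measurable (dir_convex_coord_left_lipschitz phi_dcx).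
have HE V : (fun w => (phi (vec_at (replaced_outputs V) w))%:E) =
    (fun w => H (vec_at V w, others w)).
  by apply/funext => w; rewrite replaced_outputsE.
rewrite !HE => int1 int2.
have ip1 := integrable_replaced_prod mV1 V1_indep mH int1.
have ip2 := integrable_replaced_prod mV2 V2_indep mH int2.
rewrite !integral_replaced_prod // -!integral21_prod_meas1 //.
apply: ae_le_integral; [exact: measurable_fubini_G ip1|exact: measurable_fubini_G ip2|].
apply: filterS2 (ae_integrable2 ip1) (ae_integrable2 ip2) => z iz1 iz2.
have mHz := measurable_int _ iz1.
move/(integrable_distribution _ mHz) : iz1 => iz1.
move/(integrable_distribution _ mHz) : iz2 => iz2.
rewrite /fubini_G !integral_distribution_measurable //.
exact: V12 (dir_convex_comp_combine z phi_dcx) iz1 iz2.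
Qed.

End single_replacement.

End dcx_replacement.

Theorem theorem15 (R : realType) (d : measure_display) (T : measurableType d)
  (P : probability T R) (n t : nat) (hn : (0 < n)%N) (ht : (0 < t)%N)
  (X : 'I_n -> 'I_t -> T -> R) (i : 'I_n) (Xt : 'I_t -> T -> R)
  (f : 'I_t -> ('I_n -> R) -> R) :
  (forall k j, measurable_fun setT (X k j)) ->
  (forall j, measurable_fun setT (Xt j)) ->
  mutually_independent P X ->
  mutually_independent P (replace X i Xt) ->
  (forall j, USIA (f j)) ->
  dcx_le P (X i) Xt ->
  (exists C : ('I_t -> R) -> R,
     [/\ is_copula C, cond_increasing_copula C,
         has_copula P (X i) C & has_copula P Xt C]) ->
  let Y := fun (j : 'I_t) (w : T) => f j (fun k => X k j w) in
  let Yt := fun (j : 'I_t) (w : T) => f j (fun k => replace X i Xt k j w) in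
  dcx_le P Y Yt /\
  forall alpha : 'I_t -> R, (forall j, 0 <= alpha j) ->
    cx_le P (fun w => \sum_(j < t) alpha j * Y j w)
            (fun w => \sum_(j < t) alpha j * Yt j w).
Proof.
move=> mX mXt X_indep Xt_indep f_usia X_dcx _ Y Yt.
have dcxY : dcx_le P Y Yt.
  have Xi_indep : mutually_independent P (replace X i (X i)) by rewrite replace_id.
  have := dcx_le_replace mX f_usia (mX i) mXt Xi_indep Xt_indep X_dcx.
  by rewrite /replaced_outputs replace_id.
split => // alpha alpha_ge0 psi psi_cx.
exact: dcxY (dir_convex_comp_wsum psi_cx alpha_ge0).
Qed.
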